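(* Let $n, q$ be positive integers, let $\mathcal{A} = \langle V, V_0, V_1, E\rangle$ be an arena (over some set of colors $C$) with $n$ nodes, let $\preceq$ be any total preorder on $V$, and let $S_1$ be a $q$-state strategy of Player 0 in $\mathcal{A}$. Then there exists a chromatic $(qn+1)^n$-state strategy $S_2$ of Player 0 in $\mathcal{A}$ such that for every $v\in V$, \[\mathsf{col}(S_2, v) \subseteq \bigcup_{u\in V,\ v\preceq u} \mathsf{col}(S_1, u).\]
   Context: An arena over a set of colors $C$ is a tuple $\mathcal{A} = \langle V, V_0, V_1, E\rangle$ of finite sets with $V = V_0 \sqcup V_1$, $E \subseteq V \times C \times V$, and every node having at least one outgoing edge; for $e=(s,c,t)$ write $\mathsf{source}(e)=s$, $\mathsf{col}(e)=c$, $\mathsf{target}(e)=t$. A path is a nonempty finite or infinite sequence of edges $e_1e_2\ldots$ with $\mathsf{target}(e_i)=\mathsf{source}(e_{i+1})$; for each node $v$ there is also a $0$-length path $\lambda_v$ with source and target $v$. $\mathsf{col}$ extends letterwise to sequences of edges. A strategy of Player 0 is a function $S$ assigning to each finite path $p$ with $\mathsf{target}(p)\in V_0$ an edge $S(p)$ with $\mathsf{source}(S(p))=\mathsf{target}(p)$. A path $p=e_1e_2\ldots$ is consistent with $S$ if (when $\mathsf{source}(p)\in V_0$) $e_1=S(\lambda_{\mathsf{source}(p)})$ and for each $1\le i<|p|$ with $\mathsf{target}(e_i)\in V_0$ we have $e_{i+1}=S(e_1\ldots e_i)$. For $v\in V$, $\mathsf{col}(S,v)\subseteq C^\omega$ is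 the set of $\mathsf{col}(p)$ over all infinite paths $p$ from $v$ consistent with $S$. A memory structure is $\mathcal{M}=\langle M, m_{init},\delta\rangle$ with $M$ finite, $m_{init}\in M$, $\delta: M\times E\to M$ (extended to finite edge sequences in the usual way). $S$ is an $\mathcal{M}$-strategy if for all finite paths $p_1,p_2$ with $\mathsf{target}(p_1)=\mathsf{target}(p_2)\in V_0$, $\delta(m_{init},p_1)=\delta(m_{init},p_2)$ implies $S(p_1)=S(p_2)$. $\mathcal{M}$ is chromatic if there is $\sigma: M\times C\to M$ with $\delta(m,e)=\sigma(m,\mathsf{col}(e))$ for all $m,e$. A (chromatic) $q$-state strategy is an $\mathcal{M}$-strategy for some (chromatic) memory structure $\mathcal{M}$ with $|M|=q$. *)

From mathcomp Require Import all_boot.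
From Stdlib Require List.

Set Implicit Arguments.
Unset Strict Implicit.
Unset Printing Implicit Defensive.

Definition edge (V : finType) (C : Type) := (V * C * V)%type.
Definition esrc {V : finType} {C : Type} (e : edge V C) : V := e.1.1.
Definition ecol {V : finType} {C : Type} (e : edge V C) : C := e.1.2.
Definition etgt {V : finType} {C : Type} (e : edge V C) : V := e.2.

(* Arena <V, V0, V1, E> over colours C: V is a finite type, V0 : pred V is
   the set of Player-0 nodes (V1 is its complement), E is a finite set of
   edges (a predicate contained in some finite list), every node has an
   outgoing edge. *)
Record arena (V : finType) (C : Type) := Arena {
  V0 : pred V;
  E : edge V C -> Prop;
  E_finite : exists s : seq (edge V C), forall e, E e -> List.In e s;
  E_total : forall v : V, exists e, E e /\ esrc e = v
}.

Section Games.
Variables (V : finType) (C : Type) (A : arena V C).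

(* A finite path is given by its source node v and its list of edges p;
   the empty list is the 0-length path lambda_v. *)
Fixpoint fpath (v : V) (p : seq (edge V C)) : Prop :=
  match p with
  | [::] => True
  | e :: p' => E A e /\ esrc e = v /\ fpath (etgt e) p'
  end.

Definition ptarget (v : V) (p : seq (edge V C)) : V := last v (map etgt p).

Definition is_strategy (S : V -> seq (edge V C) -> edge V C) : Prop :=
  forall v p, fpath v p -> ptarget v p \in V0 A ->
    E A (S v p) /\ esrc (S v p) = ptarget v p.

Definition ipath (v : V) (rho : nat -> edge V C) : Prop :=
  (forall i, E A (rho i)) /\ esrc (rho 0) = v /\
  (forall i, etgt (rho i) = esrc (rho i.+1)).

Definition iconsistent (S : V -> seq (edge V C) -> edge V C) (v : V)
  (rho : nat -> edge V C) : Prop :=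
  forall i, ptarget v (mkseq rho i) \in V0 A -> rho i = S v (mkseq rho i).

Definition colS (S : V -> seq (edge V C) -> edge V C) (v : V)
  (w : nat -> C) : Prop :=
  exists rho, ipath v rho /\ iconsistent S v rho /\
    forall i, w i = ecol (rho i).

(* Memory structures M = <M, m_init, delta>; delta extended to finite
   sequences of edges by left folding. *)
Definition mem_update (M : finType) (delta : M -> edge V C -> M)
  (m : M) (p : seq (edge V C)) : M := foldl delta m p.

Definition is_M_strategy (M : finType) (minit : M) (delta : M -> edge V C -> M)
  (S : V -> seq (edge V C) -> edge V C) : Prop :=
  forall v1 p1 v2 p2, fpath v1 p1 -> fpath v2 p2 ->
    ptarget v1 p1 = ptarget v2 p2 -> ptarget v1 p1 \in V0 A ->
    mem_update delta minit p1 = mem_update delta minit p2 ->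
    S v1 p1 = S v2 p2.

Definition chromatic (M : finType) (delta : M -> edge V C -> M) : Prop :=
  exists sigma : M -> C -> M, forall m e, E A e -> delta m e = sigma m (ecol e).

Definition q_state (q : nat) (S : V -> seq (edge V C) -> edge V C) : Prop :=
  is_strategy S /\
  exists (M : finType) (minit : M) (delta : M -> edge V C -> M),
    #|M| = q /\ is_M_strategy minit delta S.

Definition chromatic_q_state (q : nat) (S : V -> seq (edge V C) -> edge V C)
  : Prop :=
  is_strategy S /\
  exists (M : finType) (minit : M) (delta : M -> edge V C -> M),
    #|M| = q /\ chromatic delta /\ is_M_strategy minit delta S.

End Games.

Definition total_preorder (T : Type) (le : T -> T -> Prop) : Prop :=
  (forall x, le x x) /\ (forall x y z, le x y -> le y z -> le x z) /\
  (forall x y, le x y \/ le y x).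

From Pilot Require Import Defs.
From mathcomp Require Import all_boot.
From Stdlib Require Import Classical ClassicalEpsilon.

(* The memory of S2 is a summary of the history: for each node y it records either
   nothing, or a pair (m, u) such that some play from u consistent with S1, with the
   same colours as the history, ends at y with S1 in memory state m; among such
   origins u a le-maximal one is kept. A summary is updated from the colour of the
   last edge alone, and there are (q n + 1)^n of them. At a Player-0 node, S2 plays
   the move of S1 for the recorded memory state, which is well defined since S1 only
   depends on its memory and the current node. Along a play from v consistent with
   S2, the entry at the current node has an origin u with v <= u, because S2's own
   move keeps that origin a candidate and maximal origins are kept. So for every k
   some u with v <= u starts an S1-consistent prefix of length k with the right
   colours; one u works for all k by the pigeonhole principle, and König's lemma
   (the arena is finitely branching) yields an infinite such play from u. *)

Set Implicit Arguments.
Unset Strict Implicit.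
Unset Printing Implicit Defensive.

(* all_boot exports a notation [fpath] (from path.v) shadowing the one of Defs. *)
Local Notation fpath := Defs.fpath.

Lemma infinite_pigeonhole (T : Type) (s : seq T) (Q : T -> nat -> Prop) :
  (forall x k k', k <= k' -> Q x k' -> Q x k) ->
  (forall k, exists2 x, List.In x s & Q x k) ->
  exists2 x, List.In x s & forall k, Q x k.
Proof.
move=> Q_down; elim: s => [|x s IHs] Qs; first by case: (Qs 0).
case: (classic (forall k, Q x k)) => [Qx | /not_all_ex_not [k0 nQx]].
  by exists x; first left.
have [y ys Qy] : exists2 y, List.In y s & forall k, Q y k.
  apply: IHs => k; have [y [<- | ys] Qy] := Qs (k0 + k).
    by case: nQx; apply: Q_down Qy; apply: leq_addr.
  by exists y => //; apply: Q_down Qy; apply: leq_addl.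
by exists y; first right.
Qed.

Section Koenig.
Variables (T : Type) (s : seq T) (P : seq T -> Prop).
Hypothesis P_catl : forall h1 h2, P (h1 ++ h2) -> P h1.
Hypothesis P_In : forall h e, P (rcons h e) -> List.In e s.
Hypothesis P_unbounded : forall k, exists2 h, size h = k & P h.

Let extendable h := forall k, exists2 h', size h' = k & P (h ++ h').

Lemma extendable_rcons h : extendable h -> exists e, extendable (rcons h e).
Proof.
move=> ext_h.
have [e _ ext_he] : exists2 e, List.In e s & extendable (rcons h e).
  apply: infinite_pigeonhole => [e k k' le_kk' [h' sz_h' P_h'] | k].
    exists (take k h'); first by rewrite size_takel // sz_h'.
    by move: P_h'; rewrite -{1}(cat_take_drop k h') catA => /P_catl.
  have [[|e h'] //= [sz_h'] P_h] := ext_h k.+1.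
  exists e; last by exists h'; rewrite ?cat_rcons.
  by apply: (@P_In h); move: P_h; rewrite -cat_rcons => /P_catl.
by exists e.
Qed.

Lemma koenig : exists rho : nat -> T, forall k, P (mkseq rho k).
Proof.
have [[|x0 []] //= _ _] := P_unbounded 1.
have [next next_ext] :
    exists next : seq T -> T, forall h, extendable h -> extendable (rcons h (next h)).
  apply: (choice (fun h e => extendable h -> extendable (rcons h e))) => h.
  case: (classic (extendable h)) => [/extendable_rcons [e ext_he] | not_ext].
    by exists e.
  by exists x0 => /not_ext.
pose fix prefix k := if k is k'.+1 then rcons (prefix k') (next (prefix k')) else [::].
exists (fun k => next (prefix k)) => k.
have -> : mkseq (fun i => next (prefix i)) k = prefix k.
  by elim: k => //= k IH; rewrite mkseqS IH.
have ext_k : extendable (prefix k) by elim: k => [|k /next_ext].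
have [h' /size0nil ->] := ext_k 0.
by rewrite cats0.
Qed.
End Koenig.

Lemma mem_In (T : eqType) (s : seq T) x : x \in s -> List.In x s.
Proof.
by elim: s => //= y s IHs; rewrite in_cons => /predU1P [->|/IHs]; [left|right].
Qed.

Lemma rcons_eq_cat_cons (T : Type) h (e : T) h1 x h2 :
  rcons h e = h1 ++ x :: h2 ->
  h1 = h /\ x = e \/ exists h2', h = h1 ++ x :: h2'.
Proof.
case/lastP: h2 => [|h2 y]; rewrite ?cats1 -?rcons_cons -?rcons_cat => /rcons_inj [-> ->].
  by left.
by right; exists h2.
Qed.

Lemma total_preorder_max_seq (T : eqType) (le : T -> T -> Prop) (s : seq T)
    (P : T -> Prop) :
  total_preorder le -> (exists2 x, x \in s & P x) ->
  exists u, P u /\ forall x, x \in s -> P x -> le x u.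
Proof.
move=> [le_refl [le_trans le_total]]; elim: s => [[]//|x s IHs] [y].
case: (classic (exists2 y, y \in s & P y)) => [/IHs [u [Pu u_max]] _ _ | no_Ps].
  case: (classic (P x)) => [Px | nPx].
    case: (le_total x u) => [le_xu | le_ux].
      by exists u; split=> // z /predU1P [->|]; last exact: u_max.
    exists x; split=> // z /predU1P [-> //|zs Pz].
    exact: le_trans (u_max z zs Pz) le_ux.
  by exists u; split=> // z /predU1P [->|]; last exact: u_max.
move=> /predU1P [-> Px|ys Py]; last by case: no_Ps; exists y.
exists x; split=> // z /predU1P [-> //|zs Pz].
by case: no_Ps; exists z.
Qed.

Section Plays.
Variables (V : finType) (C : Type) (A : arena V C).

Lemma fpath_cat v h1 h2 :
  fpath A v (h1 ++ h2) <-> fpath A v h1 /\ fpath A (ptarget v h1) h2.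
Proof. by elim: h1 v => [|e h1 IH] v /=; [tauto | rewrite IH; tauto]. Qed.

Lemma fpath_rcons v h e :
  fpath A v (rcons h e) <-> fpath A v h /\ E A e /\ esrc e = ptarget v h.
Proof. by rewrite -cats1 fpath_cat /=; tauto. Qed.

Lemma ptarget_rcons v h (e : edge V C) : ptarget v (rcons h e) = etgt e.
Proof. by rewrite /ptarget map_rcons last_rcons. Qed.

Lemma ptarget_mkseq v rho k : ipath A v rho -> ptarget v (mkseq rho k) = esrc (rho k).
Proof.
case=> _ [rho0 rho_link]; elim: k => [|k IHk]; first by rewrite rho0.
by rewrite mkseqS ptarget_rcons rho_link.
Qed.

Definition consistent_prefix (S : V -> seq (edge V C) -> edge V C) (w : nat -> C)
    (u : V) (h : seq (edge V C)) : Prop :=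
  fpath A u h /\ forall h1 e h2, h = h1 ++ e :: h2 ->
    ecol e = w (size h1) /\ (ptarget u h1 \in V0 A -> e = S u h1).

Variables (S : V -> seq (edge V C) -> edge V C) (w : nat -> C).

Lemma consistent_prefix_catl u h1 h2 :
  consistent_prefix S w u (h1 ++ h2) -> consistent_prefix S w u h1.
Proof.
case=> /fpath_cat [path_h1 _] h_ok; split=> // h1' e h2' h1E.
by apply: h_ok; rewrite h1E -catA.
Qed.

Lemma consistent_prefix_rcons u h e :
  consistent_prefix S w u h -> E A e -> esrc e = ptarget u h -> ecol e = w (size h) ->
  (ptarget u h \in V0 A -> e = S u h) -> consistent_prefix S w u (rcons h e).
Proof.
move=> [path_h h_ok] Ee src_e col_e S_e; split; first exact/fpath_rcons.
move=> h1 x h2 he_eq; case: (rcons_eq_cat_cons he_eq) => [[-> ->] // | [h2' h_eq]].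
exact: h_ok h_eq.
Qed.

Lemma colS_of_consistent_prefixes u rho :
  (forall k, consistent_prefix S w u (mkseq rho k)) -> colS A S u w.
Proof.
move=> rho_ok; exists rho.
have rho_path i :
    fpath A u (mkseq rho i) /\ E A (rho i) /\ esrc (rho i) = ptarget u (mkseq rho i).
  by case: (rho_ok i.+1); rewrite mkseqS => /fpath_rcons.
have rho_last i : ecol (rho i) = w i /\
    (ptarget u (mkseq rho i) \in V0 A -> rho i = S u (mkseq rho i)).
  case: (rho_ok i.+1) => _ prefix_ok.
  have := prefix_ok (mkseq rho i) (rho i) [::].
  by rewrite size_mkseq; apply; rewrite mkseqS cats1.
split; [split; [|split] | split].
- by move=> i; case: (rho_path i) => _ [].
- by case: (rho_path 0) => _ [].
- by move=> i; case: (rho_path i.+1) => _ [_ ->]; rewrite mkseqS ptarget_rcons.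
- by move=> i; case: (rho_last i).
- by move=> i; case: (rho_last i) => ->.
Qed.

Lemma colS_of_unbounded_prefixes u :
  (forall k, exists2 h, size h = k & consistent_prefix S w u h) -> colS A S u w.
Proof.
move=> unbounded; have [s s_E] := E_finite A.
have edges_In h e : consistent_prefix S w u (rcons h e) -> List.In e s.
  by case=> /fpath_rcons [_ [Ee _]] _; apply: s_E.
have [rho rho_ok] := koenig (@consistent_prefix_catl u) edges_In unbounded.
exact: colS_of_consistent_prefixes rho_ok.
Qed.

Lemma M_strategy_next_move (M : finType) (minit : M) (delta : M -> edge V C -> M) :
  is_strategy A S -> is_M_strategy A minit delta S ->
  exists next : M -> V -> edge V C,
    (forall m t, E A (next m t) /\ esrc (next m t) = t) /\
    (forall u h, fpath A u h -> ptarget u h \in V0 A ->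
       next (mem_update delta minit h) (ptarget u h) = S u h).
Proof.
move=> S_strat S_mem.
pose next_ok (mt : M * V) e := [/\ E A e, esrc e = mt.2 &
  forall u h, fpath A u h -> ptarget u h = mt.2 -> mt.2 \in V0 A ->
    mem_update delta minit h = mt.1 -> e = S u h].
have [next next_okP] : exists next, forall mt, next_ok mt (next mt).
  apply: choice => -[m t].
  case: (classic (exists u h, [/\ fpath A u h, ptarget u h = t, t \in V0 A &
                                  mem_update delta minit h = m])).
    move=> [u [h [path_h tgt_h t0 mem_h]]].
    have [Ee src_e] : E A (S u h) /\ esrc (S u h) = ptarget u h.
      by apply: S_strat; rewrite ?tgt_h.
    exists (S u h); split; rewrite -?tgt_h // => u' h' path_h' tgt_h' _ mem_h'.
    by apply: S_mem; rewrite ?tgt_h ?tgt_h' ?mem_h ?mem_h'.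
  move=> none; have [e [Ee src_e]] := E_total A t.
  exists e; split=> // u h path_h tgt_h t0 mem_h.
  by case: none; exists u, h.
exists (fun m t => next (m, t)); split=> [m t | u h path_h t0].
  by case: (next_okP (m, t)).
by case: (next_okP (mem_update delta minit h, ptarget u h)) => _ _; apply.
Qed.

End Plays.

Section SummaryStrategy.
Variables (V : finType) (C : Type) (A : arena V C) (le : V -> V -> Prop).
Hypothesis le_preorder : total_preorder le.
Variables (S1 : V -> seq (edge V C) -> edge V C) (M1 : finType) (minit : M1).
Variables (delta1 : M1 -> edge V C -> M1) (next : M1 -> V -> edge V C).
Hypothesis next_move : forall m t, E A (next m t) /\ esrc (next m t) = t.
Hypothesis next_S1 : forall u h, fpath A u h -> ptarget u h \in V0 A ->
  next (mem_update delta1 minit h) (ptarget u h) = S1 u h.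

Definition summary := {ffun V -> option (M1 * V)}.

Definition candidate (f : summary) (c : C) (y' : V) (m' : M1) (u : V) : Prop :=
  exists m e, [/\ f (esrc e) = Some (m, u), E A e, ecol e = c, etgt e = y' &
    (esrc e \in V0 A -> e = next m (esrc e))] /\ m' = delta1 m e.

Definition best_candidate (f : summary) (c : C) (y' : V) (o : option (M1 * V)) :=
  match o with
  | Some (m', u) => candidate f c y' m' u /\
                    forall m'' u', candidate f c y' m'' u' -> le u' u
  | None => forall m' u, ~ candidate f c y' m' u
  end.

Lemma best_candidate_exists f c y' : exists o, best_candidate f c y' o.
Proof.
case: (classic (exists m' u, candidate f c y' m' u)) => [[m' [u cand]] | none].
  have [|u' [[m'' cand'] u'_max]] :=
    total_preorder_max_seq (s := enum V) (P := fun u => exists m', candidate f c y' m' u)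
      le_preorder.
    by exists u; [rewrite mem_enum | exists m'].
  exists (Some (m'', u')); split=> // m u'' cand_u''.
  by apply: u'_max; [rewrite mem_enum | exists m].
by exists None => m' u cand; apply: none; exists m', u.
Qed.

Definition summary_init : summary := [ffun y => Some (minit, y)].

Definition summary_step (f : summary) (c : C) : summary :=
  [ffun y' => epsilon (inhabits None) (best_candidate f c y')].

Definition summary_delta (f : summary) (e : edge V C) : summary :=
  summary_step f (ecol e).

Lemma summary_stepP f c y' : best_candidate f c y' (summary_step f c y').
Proof. by rewrite ffunE; apply: epsilon_spec; apply: best_candidate_exists. Qed.

(* The default for [None] is never used: along a play the current node always has
   an entry (summary_tracks_play). *)
Definition entry_mem (o : option (M1 * V)) : M1 := if o is Some (m, _) then m else minit.

Definition summary_strategy (v : V) (p : seq (edge V C)) : edge V C :=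
  let t := ptarget v p in next (entry_mem (foldl summary_delta summary_init p t)) t.

Lemma summary_strategy_chromatic :
  chromatic_q_state A ((#|M1| * #|V| + 1) ^ #|V|) summary_strategy.
Proof.
split=> [v p _ _ | ]; first exact: next_move.
exists summary, summary_init, summary_delta; split.
  by rewrite card_ffun card_option card_prod addn1.
split; first by exists summary_step.
by move=> v1 p1 v2 p2 _ _ tgt_eq _; rewrite /mem_update /summary_strategy tgt_eq => ->.
Qed.

Lemma summary_sound w rho k y m u :
  (forall i, ecol (rho i) = w i) ->
  foldl summary_delta summary_init (mkseq rho k) y = Some (m, u) ->
  exists h, [/\ size h = k, consistent_prefix A S1 w u h, ptarget u h = y &
                mem_update delta1 minit h = m].
Proof.
move=> rho_w; elim: k y m u => [|k IHk] y' m' u.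
  by rewrite ffunE => -[<- <-]; exists [::]; split=> //; split=> // -[].
rewrite mkseqS foldl_rcons => f_y'.
have := summary_stepP (foldl summary_delta summary_init (mkseq rho k)) (ecol (rho k)) y'.
rewrite f_y' => -[[m [e [[f_src Ee col_e tgt_e e_next] ->]]] _].
have [h [size_h h_ok tgt_h mem_h]] := IHk _ _ _ f_src.
exists (rcons h e); split.
- by rewrite size_rcons size_h.
- apply: consistent_prefix_rcons; rewrite ?tgt_h ?size_h -?rho_w //.
  move=> src0; rewrite e_next // -tgt_h -mem_h next_S1 ?tgt_h //.
  by case: h_ok.
- by rewrite ptarget_rcons.
- by move: mem_h; rewrite /mem_update foldl_rcons => ->.
Qed.

Lemma summary_tracks_play v rho k :
  ipath A v rho -> iconsistent A summary_strategy v rho ->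
  exists m u, foldl summary_delta summary_init (mkseq rho k) (esrc (rho k)) = Some (m, u)
              /\ le v u.
Proof.
case: le_preorder => le_refl [le_trans _] rho_path rho_cons.
have [rho_E [rho0 rho_link]] := rho_path.
elim: k => [|k [m [u [f_k le_vu]]]].
  by exists minit, v; rewrite rho0 ffunE.
set f := foldl _ _ (mkseq rho k) in f_k.
have cand : candidate f (ecol (rho k)) (esrc (rho k.+1)) (delta1 m (rho k)) u.
  exists m, (rho k); split=> //; split=> // src0.
  rewrite {1}(rho_cons k) ?(ptarget_mkseq _ rho_path) //.
  by rewrite /summary_strategy (ptarget_mkseq _ rho_path) f_k.
rewrite mkseqS foldl_rcons -/f.
have := summary_stepP f (ecol (rho k)) (esrc (rho k.+1)).
case: (summary_step _ _ _) => [[m' u'] [_ u'_max] | /(_ _ _ cand)] //.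
by exists m', u'; split=> //; apply: le_trans le_vu (u'_max _ _ cand).
Qed.

Lemma summary_strategy_col v w :
  colS A summary_strategy v w -> exists u, le v u /\ colS A S1 u w.
Proof.
case=> rho [rho_path [rho_cons rho_w]].
have [u _ u_ok] : exists2 u, List.In u (enum V) &
    forall k, le v u /\ exists2 h, size h = k & consistent_prefix A S1 w u h.
  apply: infinite_pigeonhole => [u k k' le_kk' [le_vu [h size_h h_ok]] | k].
    split=> //; exists (take k h); first by rewrite size_takel // size_h.
    by apply: (consistent_prefix_catl (h2 := drop k h)); rewrite cat_take_drop.
  have [m [u [f_k le_vu]]] := summary_tracks_play k rho_path rho_cons.
  have [h [size_h h_ok _ _]] := summary_sound (fun i => esym (rho_w i)) f_k.
  by exists u; [apply: mem_In; rewrite mem_enum | split=> //; exists h].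
exists u; split; first by case: (u_ok 0).
by apply: colS_of_unbounded_prefixes => k; case: (u_ok k).
Qed.

End SummaryStrategy.

Theorem theorem2 (n q : nat) (V : finType) (C : Type) (A : arena V C)
  (le : V -> V -> Prop) (S1 : V -> seq (edge V C) -> edge V C) :
  0 < n -> 0 < q -> #|V| = n ->
  total_preorder le ->
  q_state A q S1 ->
  exists S2 : V -> seq (edge V C) -> edge V C,
    chromatic_q_state A ((q * n + 1) ^ n) S2 /\
    forall (v : V) (w : nat -> C),
      colS A S2 v w -> exists u : V, le v u /\ colS A S1 u w.
Proof.
move=> _ _ <- le_preorder [S1_strat [M1 [minit [delta1 [<- S1_mem]]]]].
have [next [next_move next_S1]] := M_strategy_next_move S1_strat S1_mem.
exists (summary_strategy A le minit delta1 next); split.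
  exact: summary_strategy_chromatic.
exact: summary_strategy_col.
Qed.
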